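(* Let $r\ge 4$ and let $w:E(K_r)\to\mathbb{R}_{>0}$ be a positive edge-weighting of the complete graph $K_r$. For each edge $e$ let $C_w(e)$ be the maximum of $w(C)=\sum_{f\in E(C)}w(f)$ over all cycles $C$ of $K_r$ containing $e$, and set $\phi(e)=w(e)/C_w(e)$. If $\sum_{e\in E(K_r)}\frac{w(e)}{C_w(e)}=\frac{r-1}{2}$, then there exists $a:V(K_r)\to\mathbb{R}$ such that $\phi(uv)=\frac{a(u)+a(v)}{2}$ for all edges $uv$. *)

(* The complete graph K_r has vertex set 'I_r; its edges are
   the unordered pairs {u,v} with u != v.  An edge weighting is a symmetric
   function w : 'I_r -> 'I_r -> R (only values with u != v matter). *)
From HB Require Import structures.
From mathcomp Require Import all_boot all_order all_algebra.
From mathcomp Require Import reals.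
Set Implicit Arguments. Unset Strict Implicit. Unset Printing Implicit Defensive.
Import Order.TTheory GRing.Theory Num.Theory.
Local Open Scope ring_scope.

Section Cycles.
Variables (R : realType) (r : nat) (w : 'I_r -> 'I_r -> R).

Definition cyc_edges (s : seq 'I_r) : seq ('I_r * 'I_r) := zip s (rot 1 s).

Definition is_cycle (s : seq 'I_r) : bool := uniq s && (3 <= size s)%N.

Definition cyc_has_edge (s : seq 'I_r) (u v : 'I_r) : bool :=
  has (fun p => (p == (u, v)) || (p == (v, u))) (cyc_edges s).

Definition cyc_weight (s : seq 'I_r) : R :=
  \sum_(p <- cyc_edges s) w p.1 p.2.

(* Cycles have at most r
   vertices; we range over all k-tuples, k <= r.  The default 0 of the max is
   harmless: weights are positive and for r >= 3 every edge lies on a cycle. *)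
Definition Cw (u v : 'I_r) : R :=
  \big[Num.max/0]_(k < r.+1)
    \big[Num.max/0]_(t : k.-tuple 'I_r | is_cycle t && cyc_has_edge t u v)
      cyc_weight t.

Definition phi (u v : 'I_r) : R := w u v / Cw u v.

End Cycles.

From HB Require Import structures.
From mathcomp Require Import all_boot all_order all_algebra all_fingroup.
From mathcomp Require Import reals.
From mathcomp Require Import zify ring lra.
Import Order.TTheory GRing.Theory Num.Theory.
Local Open Scope ring_scope.

(* An ordering s of the vertices is a Hamiltonian cycle through each of its edges, so
   C_w(e) >= w(s) and phi(e) <= w(e) / w(s) along s: the phi-values along a Hamiltonian
   cycle sum to at most 1.  Summed over all r! orderings, every ordered pair of vertices
   is consecutive equally often, and the hypothesis says that the total is exactly r!.
   Hence every Hamiltonian cycle is a heaviest cycle through each of its edges.  The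
   Hamiltonian cycles a b c d ... and a c b d ... share their closing edge, so they have
   the same weight: w(ab) + w(cd) = w(ac) + w(bd).  This four-point condition forces
   w(uv) = b(u) + b(v), with b(u) the Gromov product at u of any two other vertices;
   then C_w is constantly 2 (sum of b) and a = b / (sum of b). *)

Lemma ordS_neq {n : nat} (i : 'I_n) : (1 < n)%N -> ordS i != i.
Proof.
move=> n_gt1; rewrite -val_eqE /=; have := ltn_ord i.
rewrite leq_eqVlt => /predU1P[n_eq|i_lt]; last by rewrite modn_small ?gtn_eqF.
by rewrite {1}n_eq modnn; lia.
Qed.

Lemma rot1_enum_ord (n : nat) : rot 1 (enum 'I_n) = map (@ordS n) (enum 'I_n).
Proof.
case: n => [|n]; first by rewrite !enum_ord0.
apply: (inj_map val_inj); rewrite map_rot val_enum_ord -map_comp.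
rewrite (map_comp (fun m => (m.+1 %% n.+1)%N) val) val_enum_ord [in LHS]/= rot1_cons.
rewrite -[in RHS](addn1 n) iotaD add0n cats1 map_rcons addn1 /= modnn.
congr rcons; rewrite (iotaDl 1 0) -[in RHS](map_id (iota 0 n)) -map_comp.
by apply/eq_in_map => m; rewrite mem_iota /= add0n => m_lt; rewrite modn_small.
Qed.

Lemma perm_enum_of_perm_eq {n : nat} {t : seq 'I_n} :
  perm_eq t (enum 'I_n) -> exists s : 'S_n, map s (enum 'I_n) = t.
Proof.
rewrite -val_ord_tuple => /tuple_permP[s ->].
by exists s; apply: eq_map => i; rewrite tnth_ord_tuple.
Qed.

Lemma perm_cat_enum_compl {T : finType} {s : seq T} :
  uniq s -> perm_eq (s ++ [seq x <- enum T | x \notin s]) (enum T).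
Proof.
move=> s_uniq; apply: uniq_perm; last first.
- by move=> x; rewrite mem_cat mem_filter mem_enum andbT orbN.
- exact: enum_uniq.
rewrite cat_uniq s_uniq filter_uniq ?enum_uniq // andbT.
by apply/hasP => -[x]; rewrite mem_filter => /andP[/negPf->].
Qed.

Lemma perm_pair_exists {T : finType} {j k j' k' : T} : j != k -> j' != k' ->
  exists tau : {perm T}, tau j' = j /\ tau k' = k.
Proof.
move=> jk jk'; set m := tperm j' j k'.
have mj : m != j by rewrite -[X in _ != X](tpermL j' j) (inj_eq perm_inj) eq_sym.
exists (tperm j' j * tperm m k)%g; rewrite !permM tpermL; split; last by rewrite tpermL.
by rewrite tpermD // eq_sym.
Qed.

Lemma sum_perm_pair_eq {V : nmodType} {T : finType} (F : T -> T -> V) (j k j' k' : T) :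
  j != k -> j' != k' ->
  \sum_(s : {perm T}) F (s j) (s k) = \sum_(s : {perm T}) F (s j') (s k').
Proof.
move=> jk jk'; have [tau [<- <-]] := perm_pair_exists jk jk'.
by rewrite [RHS](reindex_inj (mulgI tau)); apply: eq_bigr => s _; rewrite !permM.
Qed.

Lemma sum_neq_sym {V : nmodType} {n : nat} (F : 'I_n -> 'I_n -> V) :
  (forall u v, F u v = F v u) ->
  \sum_(u < n) \sum_(v < n | u != v) F u v =
  (\sum_(u < n) \sum_(v < n | (u < v)%N) F u v) *+ 2.
Proof.
move=> Fsym.
have swap : \sum_(u < n) \sum_(v < n | (u < v)%N) F u v =
            \sum_(u < n) \sum_(v < n | (v < u)%N) F u v.
  by rewrite (exchange_big_dep xpredT) //=; apply: eq_bigr => u _; apply: eq_bigr.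
rewrite mulr2n {2}swap -big_split; apply: eq_bigr => u _ /=.
rewrite (bigID (fun v : 'I_n => (u < v)%N)); congr (_ + _); apply: eq_bigl => v;
  by rewrite -val_eqE /= neq_ltn; case: ltngtP.
Qed.

Lemma sum_perm_cyclic_pairs {V : nmodType} {n : nat} (F : 'I_n -> 'I_n -> V) : (1 < n)%N ->
  (\sum_(s : 'S_n) \sum_(i < n) F (s i) (s (ordS i))) *+ n.-1 =
  (\sum_(u < n) \sum_(v < n | u != v) F u v) *+ n`!.
Proof.
move=> n_gt1; pose i0 : 'I_n := Ordinal (ltnW n_gt1).
pose P := \sum_(s : 'S_n) F (s i0) (s (ordS i0)).
have PE j k : j != k -> \sum_(s : 'S_n) F (s j) (s k) = P.
  by move=> jk; apply: sum_perm_pair_eq; rewrite // eq_sym ordS_neq.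
have -> : \sum_(s : 'S_n) \sum_(i < n) F (s i) (s (ordS i)) = P *+ n.
  rewrite exchange_big /= -[in RHS](card_ord n) -sumr_const.
  by apply: eq_bigr => i _; apply: PE; rewrite eq_sym ordS_neq.
have -> : (\sum_(u < n) \sum_(v < n | u != v) F u v) *+ n`! =
          \sum_(s : 'S_n) \sum_(j < n) \sum_(k < n | j != k) F (s j) (s k).
  rewrite -card_Sn -sumr_const; apply: eq_bigr => s _.
  rewrite (reindex_inj (@perm_inj _ s)); apply: eq_bigr => j _.
  by rewrite (reindex_inj (@perm_inj _ s)); apply: eq_bigl => k; rewrite (inj_eq perm_inj).
rewrite exchange_big /=.
have sum_neqP j : \sum_(k < n | j != k) P = P *+ n.-1.
  rewrite (eq_bigl (fun k => k \in predC1 j)) => [|k]; last by rewrite inE eq_sym.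
  by rewrite sumr_const cardC1 card_ord.
under eq_bigr => j _ do rewrite exchange_big /= (eq_bigr (fun=> P) (PE j)) sum_neqP.
by rewrite sumr_const card_ord -!mulrnA mulnC.
Qed.

Lemma exists_notin {T : finType} (s : seq T) : (size s < #|T|)%N -> exists x, x \notin s.
Proof.
move=> lt_sT; have /subsetPn[x _ sx] : ~~ (T \subset s); last by exists x.
by apply: contraTN lt_sT => /subset_leq_card le_Ts; rewrite -leqNgt (leq_trans le_Ts) ?card_size.
Qed.

Definition four_point {T : eqType} {R : nmodType} (w : T -> T -> R) :=
  forall a b c d, uniq [:: a; b; c; d] -> w a b + w c d = w a c + w b d.

Section FourPoint.
Context {T : finType} {R : numFieldType} (w : T -> T -> R).
Hypotheses (wsym : forall u v, w u v = w v u) (w4 : four_point w).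

Definition gromov_product u p q := (w u p + w u q - w p q) / 2.

Lemma gromov_productC u p q : gromov_product u p q = gromov_product u q p.
Proof. by rewrite /gromov_product (wsym p q) (addrC (w u p)). Qed.

Lemma gromov_product_change {u p q x : T} : u != p -> u != q -> u != x -> p != q -> p != x ->
  gromov_product u p q = gromov_product u p x.
Proof.
move=> up uq ux pq px; have [-> //|qx] := eqVneq q x.
have := w4 u q x p; rewrite /= !inE !negb_or up uq ux qx (eq_sym q p) pq (eq_sym x p) px.
rewrite (wsym x p) (wsym q p) => /(_ isT) h; rewrite /gromov_product; congr (_ / 2).
by apply/eqP; rewrite -subr_eq0 -(subrr (w u q + w p x)) {2}h; apply/eqP; ring.
Qed.

Lemma gromov_product_indep {u p q p' q' : T} :
  u != p -> u != q -> p != q -> u != p' -> u != q' -> p' != q' ->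
  gromov_product u p q = gromov_product u p' q'.
Proof.
move=> up uq pq up' uq' p'q'; have [q'p | q'p] := eqVneq q' p.
  rewrite q'p in p'q' *; rewrite (gromov_product_change up uq up' pq).
    exact: gromov_productC.
  by rewrite eq_sym.
rewrite (gromov_product_change up uq uq' pq); last by rewrite eq_sym.
rewrite gromov_productC (gromov_product_change uq' up up' q'p).
  exact: gromov_productC.
by rewrite eq_sym.
Qed.

Lemma four_point_additive : (2 < #|T|)%N ->
  exists b : T -> R, forall u v, u != v -> w u v = b u + b v.
Proof.
move=> T_gt2; have pair u : exists pq : T * T, [&& u != pq.1, u != pq.2 & pq.1 != pq.2].
  have [p] := exists_notin [:: u] (ltnW T_gt2); rewrite inE => up.
  have [q] := exists_notin [:: u; p] T_gt2; rewrite !inE !negb_or => /andP[qu qp].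
  by exists (p, q); rewrite /= !(eq_sym u) up qu eq_sym qp.
exists (fun u => gromov_product u (xchoose (pair u)).1 (xchoose (pair u)).2) => u v uv.
have [x] := exists_notin [:: u; v] T_gt2.
rewrite !inE !negb_or => /andP[]; rewrite !(eq_sym x) => ux vx.
have /and3P[up uq pq] := xchooseP (pair u); have /and3P[vp vq pq'] := xchooseP (pair v).
rewrite (gromov_product_indep up uq pq uv ux vx).
rewrite (gromov_product_indep vp vq pq' (_ : v != u) vx ux); last by rewrite eq_sym.
by rewrite /gromov_product (wsym v u); field.
Qed.

End FourPoint.

Section HamiltonCycles.
Context {R : realType} {r : nat} (w : 'I_r -> 'I_r -> R).

Lemma Cw_sym u v : Cw w u v = Cw w v u.
Proof.
rewrite /Cw; apply: eq_bigr => k _; apply: eq_bigl => t.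
by congr (_ && _); apply: eq_has => p; rewrite orbC.
Qed.

Hypothesis r_gt2 : (2 < r)%N.

Let r_gt1 : (1 < r)%N := ltnW r_gt2.
Let i0 : 'I_r := Ordinal (ltnW r_gt1).

Definition ham_weight (s : 'S_r) : R := \sum_(i < r) w (s i) (s (ordS i)).

Lemma cyc_edges_map (f : 'I_r -> 'I_r) :
  cyc_edges (map f (enum 'I_r)) = [seq (f i, f (ordS i)) | i <- enum 'I_r].
Proof. by rewrite /cyc_edges -map_rot rot1_enum_ord -map_comp zip_map. Qed.

Lemma cyc_weight_map_perm (s : 'S_r) : cyc_weight w (map s (enum 'I_r)) = ham_weight s.
Proof. by rewrite /cyc_weight cyc_edges_map big_map big_enum. Qed.

Lemma cyc_weight_le_Cw (t : seq 'I_r) u v :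
  is_cycle t -> cyc_has_edge t u v -> cyc_weight w t <= Cw w u v.
Proof.
move=> t_cyc tuv; have size_t : (size t < r.+1)%N.
  case/andP: t_cyc => t_uniq _.
  by rewrite ltnS -(card_uniqP t_uniq) -[X in (_ <= X)%N](card_ord r) max_card.
rewrite /Cw (bigD1 (Ordinal size_t)) //= le_max; apply/orP; left.
by rewrite (bigD1 (Tuple (eqxx (size t)))) ?le_max ?lexx //= t_cyc tuv.
Qed.

Lemma ham_weight_le_Cw (s : 'S_r) i : ham_weight s <= Cw w (s i) (s (ordS i)).
Proof.
rewrite -cyc_weight_map_perm; apply: cyc_weight_le_Cw.
  by rewrite /is_cycle size_map size_enum_ord r_gt2 (map_inj_uniq perm_inj) enum_uniq.
rewrite /cyc_has_edge cyc_edges_map has_map; apply/hasP; exists i; first by rewrite mem_enum.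
by rewrite /= eqxx.
Qed.

Lemma ham_edge_neq (s : 'S_r) i : s i != s (ordS i).
Proof. by rewrite (inj_eq perm_inj) eq_sym ordS_neq. Qed.

Hypothesis wpos : forall u v, u != v -> 0 < w u v.

Lemma ham_edge_gt0 (s : 'S_r) i : 0 < w (s i) (s (ordS i)).
Proof. exact/wpos/ham_edge_neq. Qed.

Lemma ham_weight_gt0 s : 0 < ham_weight s.
Proof.
rewrite /ham_weight (bigD1 i0) //= ltr_pwDl ?ham_edge_gt0 //.
by apply: sumr_ge0 => i _; apply/ltW/ham_edge_gt0.
Qed.

Lemma phi_ham_le (s : 'S_r) i :
  phi w (s i) (s (ordS i)) <= w (s i) (s (ordS i)) / ham_weight s.
Proof.
have Cw_gt0 := lt_le_trans (ham_weight_gt0 s) (ham_weight_le_Cw s i).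
by rewrite /phi ler_pM2l ?ham_edge_gt0 // lef_pV2 ?posrE ?ham_weight_gt0 ?ham_weight_le_Cw.
Qed.

Hypothesis wsym : forall u v, w u v = w v u.

Lemma phi_sym u v : phi w u v = phi w v u.
Proof. by rewrite /phi wsym Cw_sym. Qed.

Hypothesis hsum : \sum_(u < r) \sum_(v < r | (u < v)%N) phi w u v = (r%:R - 1) / 2.

Lemma sum_ham_phi : \sum_(s : 'S_r) \sum_(i < r) phi w (s i) (s (ordS i)) = r`!%:R.
Proof.
have r_pred : r%:R - 1 = r.-1%:R :> R by rewrite -{1}(prednK (ltnW r_gt1)) -natr1 addrK.
have := sum_perm_cyclic_pairs (phi w) r_gt1.
rewrite sum_neq_sym; last exact: phi_sym.
rewrite hsum mulr2n -splitr r_pred -mulrnA mulnC mulrnA.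
by apply: pmulrnI; rewrite ltn_predRL.
Qed.

Lemma Cw_ham (s : 'S_r) i : Cw w (s i) (s (ordS i)) = ham_weight s.
Proof.
pose d (t : 'S_r) j := w (t j) (t (ordS j)) / ham_weight t - phi w (t j) (t (ordS j)).
have d_ge0 t j : 0 <= d t j by rewrite subr_ge0 phi_ham_le.
have sum_d : \sum_(t : 'S_r) \sum_(j < r) d t j = 0.
  under eq_bigr => t _ do rewrite sumrB -mulr_suml divff ?gt_eqF ?ham_weight_gt0 //.
  by rewrite sumrB sum_ham_phi sumr_const card_Sn subrr.
have /eqP : d s i = 0.
  have sum_d_s : \sum_(j < r) d s j = 0.
    by apply: (psumr_eq0P _ sum_d) => // t _; apply: sumr_ge0 => j _; apply: d_ge0.
  exact: (psumr_eq0P _ sum_d_s).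
by rewrite subr_eq0 /phi => /eqP /(mulfI (lt0r_neq0 (ham_edge_gt0 s i))) /invr_inj ->.
Qed.

Lemma Cw_last_head (s : 'S_r) x t :
  map s (enum 'I_r) = x :: t -> Cw w (last x t) x = cyc_weight w (x :: t).
Proof.
move=> s_enum; have nth_s j : s j = nth x (x :: t) j.
  by rewrite -s_enum (nth_map j) ?size_enum_ord // nth_ord_enum.
have size_t : (size t).+1 = r by rewrite -[RHS](size_enum_ord r) -(size_map s (enum 'I_r)) s_enum.
rewrite -s_enum cyc_weight_map_perm -(Cw_ham s (ord_pred i0)) ord_predK !nth_s /=.
rewrite modn_small ?ltn_predL ?(ltnW r_gt1) // add0n.
have -> : r.-1 = size t := esym (congr1 predn size_t).
by rewrite (nth_last x (x :: t)).
Qed.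

Lemma ham_four_point : four_point w.
Proof.
move=> a b c d abcd; set rest := [seq x <- enum 'I_r | x \notin [:: a; b; c; d]].
have abcd_enum := perm_cat_enum_compl abcd.
have acbd_enum : perm_eq ([:: a; c; b; d] ++ rest) (enum 'I_r).
  by apply: perm_trans abcd_enum; rewrite perm_cons (perm_catCA [:: c] [:: b]).
have [s1 /Cw_last_head] := perm_enum_of_perm_eq abcd_enum.
have [s2 /Cw_last_head] := perm_enum_of_perm_eq acbd_enum.
(* Both cycles close with the edge from the last vertex of rest (or d) back to a. *)
rewrite /= => ->; rewrite -/rest /cyc_weight /cyc_edges /= !big_cons /= (wsym c b).
lra.
Qed.

Lemma Cw_additive {b : 'I_r -> R} : (forall u v, u != v -> w u v = b u + b v) ->
  forall u v, u != v -> Cw w u v = (\sum_x b x) *+ 2.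
Proof.
move=> wE u v uv; have i0S : i0 != ordS i0 by rewrite eq_sym ordS_neq.
have [s [<- <-]] := perm_pair_exists uv i0S.
rewrite Cw_ham /ham_weight.
under eq_bigr => i _ do rewrite (wE _ _ (ham_edge_neq s i)).
rewrite big_split mulr2n /= [in RHS](reindex_inj (@perm_inj _ s)); congr (_ + _).
by rewrite [RHS](reindex_inj (@ordS_inj r)).
Qed.

End HamiltonCycles.

Theorem proposition3p7 (R : realType) (r : nat) (w : 'I_r -> 'I_r -> R)
  (hr : (4 <= r)%N)
  (wsym : forall u v : 'I_r, w u v = w v u)
  (wpos : forall u v : 'I_r, u != v -> 0 < w u v)
  (hsum : \sum_(u < r) \sum_(v < r | (u < v)%N) phi w u v = (r%:R - 1) / 2) :
  exists a : 'I_r -> R,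
    forall u v : 'I_r, u != v -> phi w u v = (a u + a v) / 2.
Proof.
have r_gt2 : (2 < r)%N := ltnW hr.
have card_gt2 : (2 < #|'I_r|)%N by rewrite card_ord.
have [b wE] := four_point_additive w wsym (ham_four_point w r_gt2 wpos wsym hsum) card_gt2.
have CwE := Cw_additive w r_gt2 wpos wsym hsum wE.
exists (fun x => b x / \sum_y b y) => u v uv.
by rewrite /phi CwE // wE // -mulrDl -[in LHS]mulr_natr invfM mulrA.
Qed.
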